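(* Let $\mathcal{A}\subseteq M_n(\mathbb{C})$ be a logmodular subalgebra. Then for every positive semidefinite matrix $b\in M_n(\mathbb{C})$ there exist $a,c\in\mathcal{A}$ such that $b=a^*a=cc^*$.
   Context: A unital subalgebra $\mathcal{A}\subseteq M_n(\mathbb{C})$ (containing the identity $1_n$) is called logmodular (in $M_n(\mathbb{C})$) if the set $\{a^*a : a\in\mathcal{A}^{-1}\}$ is dense in the set of positive invertible matrices in $M_n(\mathbb{C})$, where $\mathcal{A}^{-1}$ denotes the set of elements of $\mathcal{A}$ invertible in $\mathcal{A}$. *)

(* Complex numbers are built as pairs of
   Stdlib reals; n x n complex matrices are represented as functions
   nat -> nat -> C whose entries vanish outside the index range [0,n)x[0,n)
   (predicate [wf n]).  All matrix operations below preserve [wf n]. *)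
From Stdlib Require Import Reals Arith Bool.
Open Scope R_scope.

Record C : Type := mkC { re : R ; im : R }.

Definition C0 : C := mkC 0 0.
Definition C1 : C := mkC 1 0.
Definition Cadd (x y : C) : C := mkC (re x + re y) (im x + im y).
Definition Copp (x : C) : C := mkC (- re x) (- im x).
Definition Cmul (x y : C) : C :=
  mkC (re x * re y - im x * im y) (re x * im y + im x * re y).
Definition Cconj (x : C) : C := mkC (re x) (- im x).
Definition Cnorm2 (x : C) : R := re x * re x + im x * im x.

Fixpoint Csum (k : nat) (f : nat -> C) : C :=
  match k with
  | O => C0
  | S k' => Cadd (Csum k' f) (f k')
  end.

Fixpoint Rsum (k : nat) (f : nat -> R) : R :=
  match k with
  | O => 0
  | S k' => Rsum k' f + f k'
  end.

Definition Mat : Type := nat -> nat -> C.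

Definition wf (n : nat) (A : Mat) : Prop :=
  forall i j : nat, (n <= i \/ n <= j)%nat -> A i j = C0.

Definition mid (n : nat) : Mat :=
  fun i j => if andb (andb (i <? n) (j <? n)) (i =? j) then C1 else C0.
Definition madd (A B : Mat) : Mat := fun i j => Cadd (A i j) (B i j).
Definition msub (A B : Mat) : Mat := fun i j => Cadd (A i j) (Copp (B i j)).
Definition mscal (z : C) (A : Mat) : Mat := fun i j => Cmul z (A i j).
Definition mmul (n : nat) (A B : Mat) : Mat :=
  fun i j => if andb (i <? n) (j <? n)
             then Csum n (fun k => Cmul (A i k) (B k j)) else C0.
Definition adj (A : Mat) : Mat := fun i j => Cconj (A j i).

(* squared Frobenius (Hilbert-Schmidt) norm; defines the usual topology on M_n(C) *)
Definition frob2 (n : nat) (A : Mat) : R :=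
  Rsum n (fun i => Rsum n (fun j => Cnorm2 (A i j))).

Definition psd (n : nat) (b : Mat) : Prop :=
  wf n b /\ adj b = b /\
  forall v : nat -> C,
    0 <= re (Csum n (fun i => Csum n (fun j =>
                Cmul (Cconj (v i)) (Cmul (b i j) (v j))))).

(* invertibility inside a set S of matrices (S = M_n(C) gives usual invertibility) *)
Definition invertible_in (n : nat) (S : Mat -> Prop) (a : Mat) : Prop :=
  S a /\ exists a' : Mat, S a' /\ mmul n a a' = mid n /\ mmul n a' a = mid n.

Definition positive_invertible (n : nat) (p : Mat) : Prop :=
  psd n p /\ invertible_in n (wf n) p.

Definition unital_subalgebra (n : nat) (S : Mat -> Prop) : Prop :=
  (forall a, S a -> wf n a) /\
  S (mid n) /\
  (forall a b, S a -> S b -> S (madd a b)) /\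
  (forall (z : C) a, S a -> S (mscal z a)) /\
  (forall a b, S a -> S b -> S (mmul n a b)).

Definition logmodular (n : nat) (S : Mat -> Prop) : Prop :=
  forall p : Mat, positive_invertible n p ->
  forall eps : R, 0 < eps ->
  exists a : Mat, invertible_in n S a /\
    frob2 n (msub (mmul n (adj a) a) p) < eps.

(* For [e > 0] the matrix [b + e 1] is positive invertible, so logmodularity yields [g] in [S] with
   [g^* g] arbitrarily close to [b].  The diagonal of [g^* g] bounds every entry of [g], so these [g]
   have a convergent subsequence, and its limit [a] lies in [S] because a finite-dimensional subspace
   is closed: [b = a^* a].  For the factorisation [b = c c^*], approximate [(b + e 1)^-1] by [a^* a]
   with [a] invertible in [S]; then [d = a^-1] is in [S] and [d d^* = (a^* a)^-1] is close to [b + e 1]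
   by continuity of inversion, so the same compactness argument applied to the matrices [d^*] gives [c]. *)

From Pilot Require Import Defs.
From Stdlib Require Import Reals Arith Lra Lia FunctionalExtensionality ClassicalEpsilon List.
From HB Require Import structures.
From mathcomp Require all_boot all_algebra boolp.
(* [Reals] exports a binomial coefficient [C], which hides the complex numbers of [Defs]. *)
Import Defs.
Open Scope R_scope.

Lemma Ceq (x y : C) : re x = re y -> im x = im y -> x = y.
Proof. destruct x, y; simpl; intros; subst; reflexivity. Qed.

Ltac Cring := apply Ceq; simpl; ring.

Module ComplexField.
Import all_boot all_algebra GRing.Theory.
Local Set Implicit Arguments.

HB.instance Definition _ := boolp.gen_eqMixin C.
HB.instance Definition _ := boolp.gen_choiceMixin C.

Lemma CaddA : associative Cadd. Proof. by move=> x y z; Cring. Qed.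
Lemma CaddC : commutative Cadd. Proof. by move=> x y; Cring. Qed.
Lemma Cadd0 : left_id C0 Cadd. Proof. by move=> x; Cring. Qed.
Lemma CaddN : left_inverse C0 Copp Cadd. Proof. by move=> x; Cring. Qed.
HB.instance Definition _ := GRing.isZmodule.Build C CaddA CaddC Cadd0 CaddN.

Lemma CmulA : associative Cmul. Proof. by move=> x y z; Cring. Qed.
Lemma CmulC : commutative Cmul. Proof. by move=> x y; Cring. Qed.
Lemma Cmul1 : left_id C1 Cmul. Proof. by move=> x; Cring. Qed.
Lemma CmulDl : left_distributive Cmul Cadd. Proof. by move=> x y z; Cring. Qed.
Lemma C1_neq0 : C1 != C0. Proof. by apply/eqP => -[]; lra. Qed.
HB.instance Definition _ := GRing.Zmodule_isComNzRing.Build C CmulA CmulC Cmul1 CmulDl C1_neq0.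

Definition Cinv (x : C) : C := mkC (re x / Cnorm2 x) (- im x / Cnorm2 x).

Lemma CmulVl (x : C) : x != 0%R -> Cmul (Cinv x) x = C1.
Proof.
move=> /eqP x_neq0; have n_neq0 : Cnorm2 x <> 0.
  by rewrite /Cnorm2 => n0; apply: x_neq0; apply: Ceq => /=; nra.
by apply: Ceq => /=; rewrite /Cnorm2 in n_neq0 *; field.
Qed.

Lemma Cinv0 : Cinv 0%R = 0%R.
Proof. by apply: Ceq => /=; rewrite /Rdiv; ring. Qed.
HB.instance Definition _ := GRing.ComNzRing_isField.Build C CmulVl Cinv0.

Local Open Scope ring_scope.

Lemma Csum_big n (f : nat -> C) : Csum n f = \sum_(k < n) f k.
Proof. by elim: n => [|n IH]; rewrite ?big_ord0 // big_ord_recr /= IH. Qed.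

Lemma ltb_ltn i n : Nat.ltb i n = (i < n)%N.
Proof. by apply/idP/idP => [/Nat.ltb_lt/ltP | /ltP/Nat.ltb_lt]. Qed.

Definition Mat_of_mx n (X : 'M[C]_n) : Mat := fun i j =>
  if (insub i : option 'I_n) is Some i' then
    if (insub j : option 'I_n) is Some j' then X i' j' else C0
  else C0.

Lemma Mat_of_mx_ord n (X : 'M_n) (i j : 'I_n) : Mat_of_mx X i j = X i j.
Proof. by rewrite /Mat_of_mx !valK. Qed.

Lemma wf_Mat_of_mx n (X : 'M_n) : wf n (Mat_of_mx X).
Proof.
move=> i j; rewrite /Mat_of_mx.
case: insubP => [i' _ <- [/leP|/leP j_ge]|//]; first by rewrite leqNgt ltn_ord.
by rewrite insubF // ltnNge j_ge.
Qed.

Lemma Mat_of_mx_in n (X : 'M_n) {i j} (lt_i : (i < n)%N) (lt_j : (j < n)%N) :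
  Mat_of_mx X i j = X (Ordinal lt_i) (Ordinal lt_j).
Proof. exact (Mat_of_mx_ord X (Ordinal lt_i) (Ordinal lt_j)). Qed.

Lemma mmul_Mat_of_mx n (X Y : 'M_n) :
  mmul n (Mat_of_mx X) (Mat_of_mx Y) = Mat_of_mx (X *m Y).
Proof.
apply: functional_extensionality => i; apply: functional_extensionality => j.
rewrite /mmul !ltb_ltn.
case: (ltnP i n) => [lt_i|ge_i] /=; last by symmetry; apply: wf_Mat_of_mx; left; apply/leP.
case: (ltnP j n) => [lt_j|ge_j] /=; last by symmetry; apply: wf_Mat_of_mx; right; apply/leP.
rewrite (Mat_of_mx_in _ lt_i lt_j) !mxE Csum_big; apply: eq_bigr => k _.
by rewrite -[i]/(nat_of_ord (Ordinal lt_i)) -[j]/(nat_of_ord (Ordinal lt_j)) !Mat_of_mx_ord.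
Qed.

Lemma Mat_of_mx1 n : Mat_of_mx (1%:M : 'M_n) = mid n.
Proof.
apply: functional_extensionality => i; apply: functional_extensionality => j.
rewrite /mid !ltb_ltn.
case: (ltnP i n) => [lt_i|ge_i] /=; last by apply: wf_Mat_of_mx; left; apply/leP.
case: (ltnP j n) => [lt_j|ge_j] /=; last by apply: wf_Mat_of_mx; right; apply/leP.
rewrite (Mat_of_mx_in _ lt_i lt_j) !mxE.
case: (Nat.eqb_spec i j) => ij; rewrite -(inj_eq val_inj) /=.
- by rewrite ij eqxx.
- by move/eqP/negbTE: ij => ->.
Qed.

Lemma Mat_of_mxK n (A : Mat) : wf n A -> Mat_of_mx (\matrix_(i < n, j < n) A i j) = A.
Proof.
move=> wfA; apply: functional_extensionality => i; apply: functional_extensionality => j.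
have out_ij : (n <= i \/ n <= j)%coq_nat -> Mat_of_mx (\matrix_(i < n, j < n) A i j) i j = A i j.
  by move=> out_ij; rewrite (wf_Mat_of_mx _ out_ij) (wfA _ _ out_ij).
case: (ltnP i n) => [lt_i|/leP ge_i]; last by apply: out_ij; left.
case: (ltnP j n) => [lt_j|/leP ge_j]; last by apply: out_ij; right.
by rewrite (Mat_of_mx_in _ lt_i lt_j) mxE.
Qed.

Lemma injective_invertible n (A : Mat) : wf n A ->
  (forall v : nat -> C,
     (forall i, (i < n)%coq_nat -> Csum n (fun j => Cmul (A i j) (v j)) = C0) ->
     forall i, (i < n)%coq_nat -> v i = C0) ->
  invertible_in n (wf n) A.
Proof.
move=> wfA injA; pose M : 'M[C]_n := \matrix_(i < n, j < n) A i j.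
have M_unit : M \in unitmx.
  rewrite -unitmx_tr -row_free_unit; apply: inj_row_free => v vM0.
  pose w k := if (insub k : option 'I_n) is Some k' then v 0 k' else C0.
  have w_ord (k : 'I_n) : w k = v 0 k by rewrite /w valK.
  apply/rowP => k; rewrite mxE -w_ord; apply: injA => [i /ltP lt_i|]; last exact/ltP.
  move/rowP/(_ (Ordinal lt_i)): vM0; rewrite !mxE Csum_big => vM0; rewrite -[RHS]vM0.
  by apply: eq_bigr => l _; rewrite !mxE w_ord; apply: CmulC.
split=> //; exists (Mat_of_mx (invmx M)); split; first exact: wf_Mat_of_mx.
by rewrite -(Mat_of_mxK wfA) !mmul_Mat_of_mx mulmxV ?mulVmx // Mat_of_mx1.
Qed.

End ComplexField.

Lemma Csum_ext n f g : (forall k, (k < n)%nat -> f k = g k) -> Csum n f = Csum n g.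
Proof. induction n; intros H; simpl; auto. rewrite IHn by (intros; apply H; lia). rewrite H by lia. reflexivity. Qed.

Lemma Csum_add n f g : Csum n (fun k => Cadd (f k) (g k)) = Cadd (Csum n f) (Csum n g).
Proof. induction n; simpl; [Cring|]. rewrite IHn. Cring. Qed.

Lemma Csum_mul_l n c f : Cmul c (Csum n f) = Csum n (fun k => Cmul c (f k)).
Proof. induction n; simpl; [Cring|]. rewrite <- IHn. Cring. Qed.

Lemma Csum_mul_r n c f : Cmul (Csum n f) c = Csum n (fun k => Cmul (f k) c).
Proof. induction n; simpl; [Cring|]. rewrite <- IHn. Cring. Qed.

Lemma Csum_conj n f : Cconj (Csum n f) = Csum n (fun k => Cconj (f k)).
Proof. induction n; simpl; [Cring|]. rewrite <- IHn. Cring. Qed.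

Lemma Csum_eq0 n f : (forall k, (k < n)%nat -> f k = C0) -> Csum n f = C0.
Proof. induction n; intros H; simpl; auto. rewrite IHn by (intros; apply H; lia). rewrite H by lia. Cring. Qed.

Lemma Csum_swap n m (f : nat -> nat -> C) :
  Csum n (fun i => Csum m (fun j => f i j)) = Csum m (fun j => Csum n (fun i => f i j)).
Proof.
  induction n; simpl.
  - symmetry; apply Csum_eq0; auto.
  - rewrite IHn, <- Csum_add. reflexivity.
Qed.

Lemma Csum_single n i f :
  (i < n)%nat -> (forall k, (k < n)%nat -> k <> i -> f k = C0) -> Csum n f = f i.
Proof.
  induction n; intros Hi H; [lia|]. simpl.
  destruct (Nat.eq_dec i n) as [->|Hne].
  - rewrite Csum_eq0 by (intros; apply H; lia). Cring.
  - rewrite IHn, (H n) by (try lia; intros; apply H; lia). Cring.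
Qed.

Lemma re_Csum n f : re (Csum n f) = Rsum n (fun k => re (f k)).
Proof. induction n; simpl; auto. rewrite IHn; auto. Qed.

Lemma im_Csum n f : im (Csum n f) = Rsum n (fun k => im (f k)).
Proof. induction n; simpl; auto. rewrite IHn; auto. Qed.

Lemma Rsum_ext n f g : (forall k, (k < n)%nat -> f k = g k) -> Rsum n f = Rsum n g.
Proof. induction n; intros H; simpl; auto. rewrite IHn by (intros; apply H; lia). rewrite H by lia. reflexivity. Qed.

Lemma Rsum_le n f g : (forall k, (k < n)%nat -> f k <= g k) -> Rsum n f <= Rsum n g.
Proof.
  induction n; intros H; simpl; [lra|].
  assert (f n <= g n) by (apply H; lia).
  assert (Rsum n f <= Rsum n g) by (apply IHn; intros; apply H; lia). lra.
Qed.

Lemma Rsum_add n f g : Rsum n (fun k => f k + g k) = Rsum n f + Rsum n g.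
Proof. induction n; simpl; [ring|]. rewrite IHn. ring. Qed.

Lemma Rsum_mul_l n c f : c * Rsum n f = Rsum n (fun k => c * f k).
Proof. induction n; simpl; [ring|]. rewrite <- IHn. ring. Qed.

Lemma Rsum_const n c : Rsum n (fun _ => c) = INR n * c.
Proof. induction n; [simpl; ring|]. rewrite S_INR. simpl Rsum. rewrite IHn. ring. Qed.

Lemma Rsum_nonneg n f : (forall k, (k < n)%nat -> 0 <= f k) -> 0 <= Rsum n f.
Proof. intros H. rewrite <- (Rmult_0_r (INR n)), <- Rsum_const. apply Rsum_le; auto. Qed.

Lemma Rsum_ge_term n f i : (forall k, (k < n)%nat -> 0 <= f k) -> (i < n)%nat -> f i <= Rsum n f.
Proof.
  induction n; intros H Hi; [lia|]. simpl.
  assert (0 <= f n) by (apply H; lia).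
  destruct (Nat.eq_dec i n) as [->|Hne].
  - assert (0 <= Rsum n f) by (apply Rsum_nonneg; intros; apply H; lia). lra.
  - assert (f i <= Rsum n f) by (apply IHn; [intros; apply H|]; lia). lra.
Qed.

Lemma Rsum_swap n m (f : nat -> nat -> R) :
  Rsum n (fun i => Rsum m (fun j => f i j)) = Rsum m (fun j => Rsum n (fun i => f i j)).
Proof.
  induction n; simpl.
  - rewrite Rsum_const. ring.
  - rewrite IHn, <- Rsum_add. reflexivity.
Qed.

Lemma Cnorm2_ge0 z : 0 <= Cnorm2 z.
Proof. unfold Cnorm2. nra. Qed.

Ltac mat_ext := apply functional_extensionality; intro i; apply functional_extensionality; intro j.

Lemma mmul_in n A B i j : (i < n)%nat -> (j < n)%nat ->
  mmul n A B i j = Csum n (fun k => Cmul (A i k) (B k j)).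
Proof. intros Hi Hj. unfold mmul. rewrite (proj2 (Nat.ltb_lt i n) Hi), (proj2 (Nat.ltb_lt j n) Hj). reflexivity. Qed.

Lemma wf_mmul n A B : wf n (mmul n A B).
Proof.
  intros i j [H|H]; unfold mmul; rewrite (proj2 (Nat.ltb_ge _ _) H); [|rewrite Bool.andb_false_r]; reflexivity.
Qed.

Lemma mid_in n i j : (i < n)%nat -> (j < n)%nat -> mid n i j = if Nat.eqb i j then C1 else C0.
Proof. intros Hi Hj. unfold mid. rewrite (proj2 (Nat.ltb_lt i n) Hi), (proj2 (Nat.ltb_lt j n) Hj). reflexivity. Qed.

Lemma mid_diag n i : (i < n)%nat -> mid n i i = C1.
Proof. intros Hi. rewrite mid_in, Nat.eqb_refl by auto. reflexivity. Qed.

Lemma mid_offdiag n i j : (i < n)%nat -> (j < n)%nat -> i <> j -> mid n i j = C0.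
Proof. intros Hi Hj Hij. rewrite mid_in, (proj2 (Nat.eqb_neq i j) Hij) by auto. reflexivity. Qed.

Lemma wf_mid n : wf n (mid n).
Proof.
  intros i j [H|H]; unfold mid; rewrite (proj2 (Nat.ltb_ge _ _) H); [|rewrite Bool.andb_false_r]; reflexivity.
Qed.

Lemma wf_adj n A : wf n A -> wf n (adj A).
Proof. intros HA i j Hij. unfold adj. rewrite HA by tauto. Cring. Qed.

Lemma wf_madd n A B : wf n A -> wf n B -> wf n (madd A B).
Proof. intros HA HB i j H. unfold madd. rewrite HA, HB by auto. Cring. Qed.

Lemma wf_mscal n z A : wf n A -> wf n (mscal z A).
Proof. intros HA i j H. unfold mscal. rewrite HA by auto. Cring. Qed.

Lemma wf_ext n A B : wf n A -> wf n B ->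
  (forall i j, (i < n)%nat -> (j < n)%nat -> A i j = B i j) -> A = B.
Proof.
  intros HA HB H. mat_ext.
  destruct (Nat.lt_ge_cases i n); [destruct (Nat.lt_ge_cases j n)|]; auto.
  all: rewrite HA, HB by auto; reflexivity.
Qed.

Lemma mmul_mid_r n A : wf n A -> mmul n A (mid n) = A.
Proof.
  intros HA. apply (wf_ext n); auto using wf_mmul. intros i j Hi Hj.
  rewrite mmul_in, (Csum_single n j), (mid_diag n) by
    (auto; intros k Hk Hkj; rewrite mid_offdiag by auto; Cring). Cring.
Qed.

Lemma mmul_mid_l n A : wf n A -> mmul n (mid n) A = A.
Proof.
  intros HA. apply (wf_ext n); auto using wf_mmul. intros i j Hi Hj.
  rewrite mmul_in, (Csum_single n i), (mid_diag n) by
    (auto; intros k Hk Hkj; rewrite mid_offdiag by auto; Cring). Cring.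
Qed.

Lemma mmul_assoc n A B D : mmul n (mmul n A B) D = mmul n A (mmul n B D).
Proof.
  apply (wf_ext n); auto using wf_mmul. intros i j Hi Hj. rewrite !mmul_in by auto.
  transitivity (Csum n (fun k => Csum n (fun l => Cmul (A i l) (Cmul (B l k) (D k j))))).
  - apply Csum_ext; intros k Hk. rewrite mmul_in, Csum_mul_r by auto. apply Csum_ext; intros; Cring.
  - rewrite Csum_swap. apply Csum_ext; intros l Hl. rewrite mmul_in, Csum_mul_l by auto. reflexivity.
Qed.

Lemma mmul_madd_r n A B D : mmul n A (madd B D) = madd (mmul n A B) (mmul n A D).
Proof.
  apply (wf_ext n); auto using wf_mmul, wf_madd. intros i j Hi Hj. unfold madd at 2.
  rewrite !mmul_in, <- Csum_add by auto. apply Csum_ext; intros; unfold madd; Cring.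
Qed.

Lemma mmul_madd_l n A B D : mmul n (madd A B) D = madd (mmul n A D) (mmul n B D).
Proof.
  apply (wf_ext n); auto using wf_mmul, wf_madd. intros i j Hi Hj. unfold madd at 2.
  rewrite !mmul_in, <- Csum_add by auto. apply Csum_ext; intros; unfold madd; Cring.
Qed.

Lemma adj_mmul n A B : adj (mmul n A B) = mmul n (adj B) (adj A).
Proof.
  apply (wf_ext n); auto using wf_adj, wf_mmul. intros i j Hi Hj. unfold adj at 1.
  rewrite !mmul_in, Csum_conj by auto. apply Csum_ext; intros; unfold adj; Cring.
Qed.

Lemma adj_adj A : adj (adj A) = A.
Proof. mat_ext. unfold adj. Cring. Qed.

Lemma adj_mid n : adj (mid n) = mid n.
Proof.
  mat_ext. unfold adj, mid.
  rewrite (Nat.eqb_sym j i), (Bool.andb_comm (j <? n)). destruct (_ && _)%bool; Cring.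
Qed.

Lemma adj_madd A B : adj (madd A B) = madd (adj A) (adj B).
Proof. mat_ext. unfold adj, madd. Cring. Qed.

Definition rscal (r : R) (A : Mat) : Mat := mscal (mkC r 0) A.

Lemma adj_rscal r A : adj (rscal r A) = rscal r (adj A).
Proof. mat_ext. unfold adj, rscal, mscal. Cring. Qed.

Definition mv n (A : Mat) (v : nat -> C) (i : nat) : C := Csum n (fun j => Cmul (A i j) (v j)).

Definition qf n (A : Mat) (v : nat -> C) : C :=
  Csum n (fun i => Csum n (fun j => Cmul (Cconj (v i)) (Cmul (A i j) (v j)))).

Lemma qf_mv n A v : qf n A v = Csum n (fun i => Cmul (Cconj (v i)) (mv n A v i)).
Proof. unfold qf, mv. apply Csum_ext; intros. rewrite Csum_mul_l. reflexivity. Qed.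

Lemma mv_mmul n A B v i : (i < n)%nat -> mv n (mmul n A B) v i = mv n A (mv n B v) i.
Proof.
  intros Hi. unfold mv.
  transitivity (Csum n (fun j => Csum n (fun k => Cmul (A i k) (Cmul (B k j) (v j))))).
  - apply Csum_ext; intros j Hj. rewrite mmul_in, Csum_mul_r by auto. apply Csum_ext; intros; Cring.
  - rewrite Csum_swap. apply Csum_ext; intros. rewrite Csum_mul_l. reflexivity.
Qed.

Lemma mv_mid n v i : (i < n)%nat -> mv n (mid n) v i = v i.
Proof.
  intros Hi. unfold mv.
  rewrite (Csum_single n i), (mid_diag n) by (auto; intros k Hk Hki; rewrite mid_offdiag by auto; Cring).
  Cring.
Qed.

Definition shift n (b : Mat) (e : R) : Mat := madd b (rscal e (mid n)).

Lemma wf_shift n b e : wf n b -> wf n (shift n b e).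
Proof. intros Hb. apply wf_madd, wf_mscal, wf_mid. exact Hb. Qed.

Lemma qf_shift n b e v : qf n (shift n b e) v =
  Cadd (qf n b v) (Cmul (mkC e 0) (Csum n (fun i => Cmul (Cconj (v i)) (v i)))).
Proof.
  unfold qf, shift, madd, rscal, mscal. rewrite Csum_mul_l, <- Csum_add. apply Csum_ext; intros i Hi.
  rewrite (Csum_ext n _ (fun j => Cadd (Cmul (Cconj (v i)) (Cmul (b i j) (v j)))
                                      (Cmul (Cconj (v i)) (Cmul (Cmul (mkC e 0) (mid n i j)) (v j)))))
    by (intros; Cring).
  rewrite Csum_add,
    (Csum_single n i (fun j => Cmul (Cconj (v i)) (Cmul (Cmul (mkC e 0) (mid n i j)) (v j)))),
    (mid_diag n) by (auto; intros k Hk Hki; rewrite mid_offdiag by auto; Cring).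
  Cring.
Qed.

Lemma re_qf_shift n b e v :
  re (qf n (shift n b e) v) = re (qf n b v) + e * Rsum n (fun i => Cnorm2 (v i)).
Proof.
  rewrite qf_shift. simpl. rewrite re_Csum, im_Csum.
  rewrite (Rsum_ext n (fun k => im (Cmul (Cconj (v k)) (v k))) (fun _ => 0)) by (intros; simpl; ring).
  rewrite (Rsum_ext n (fun k => re (Cmul (Cconj (v k)) (v k))) (fun k => Cnorm2 (v k)))
    by (intros; unfold Cnorm2; simpl; ring).
  rewrite Rsum_const. ring.
Qed.

Lemma psd_shift n b e : psd n b -> 0 <= e -> psd n (shift n b e).
Proof.
  intros (Hw & Hh & Hq) He. split; [apply wf_shift; auto | split].
  - unfold shift. rewrite adj_madd, adj_rscal, adj_mid, Hh. reflexivity.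
  - intros v. fold (qf n (shift n b e) v). rewrite re_qf_shift.
    assert (0 <= Rsum n (fun i => Cnorm2 (v i))) by (apply Rsum_nonneg; intros; apply Cnorm2_ge0).
    specialize (Hq v). fold (qf n b v) in Hq. nra.
Qed.

Lemma shift_injective n b e : psd n b -> 0 < e -> forall v,
  (forall i, (i < n)%nat -> mv n (shift n b e) v i = C0) -> forall i, (i < n)%nat -> v i = C0.
Proof.
  intros (_ & _ & Hq) He v Hv i Hi.
  assert (Hqf : re (qf n (shift n b e) v) = 0).
  { rewrite qf_mv, Csum_eq0; [reflexivity|]. intros k Hk. rewrite Hv by auto. Cring. }
  rewrite re_qf_shift in Hqf. specialize (Hq v). fold (qf n b v) in Hq.
  assert (Hsum : Rsum n (fun k => Cnorm2 (v k)) = 0).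
  { assert (0 <= Rsum n (fun k => Cnorm2 (v k))) by (apply Rsum_nonneg; intros; apply Cnorm2_ge0). nra. }
  assert (Cnorm2 (v i) <= 0).
  { rewrite <- Hsum. apply (Rsum_ge_term n (fun k => Cnorm2 (v k))); auto. intros; apply Cnorm2_ge0. }
  unfold Cnorm2 in *. apply Ceq; simpl; nra.
Qed.

Lemma positive_invertible_shift n b e : psd n b -> 0 < e -> positive_invertible n (shift n b e).
Proof.
  intros Hb He. split; [apply psd_shift; auto; lra|].
  apply ComplexField.injective_invertible; [apply wf_shift, Hb|].
  apply (shift_injective n b e Hb He).
Qed.

Lemma psd_inverse n p q : psd n p -> wf n q -> mmul n p q = mid n -> mmul n q p = mid n -> psd n q.
Proof.
  intros (Hw & Hh & Hq) Hwq Hpq Hqp. split; [auto | split].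
  - rewrite <- (mmul_mid_r n (adj q)), <- Hpq, <- mmul_assoc by (apply wf_adj; auto).
    rewrite <- Hh at 1. rewrite <- adj_mmul, Hpq, adj_mid. apply mmul_mid_l; auto.
  - intros v. fold (qf n q v).
    assert (Hv : forall i, (i < n)%nat -> v i = mv n p (mv n q v) i).
    { intros i Hi. rewrite <- mv_mmul, Hpq, mv_mid; auto. }
    assert (E : qf n q v = Cconj (qf n p (mv n q v))).
    { rewrite (qf_mv n q v), (qf_mv n p), Csum_conj. apply Csum_ext; intros i Hi.
      rewrite Hv at 1 by auto. Cring. }
    rewrite E. apply (Hq (mv n q v)).
Qed.

Definition strictly_increasing (phi : nat -> nat) : Prop := forall k, (phi k < phi (S k))%nat.

Lemma strictly_increasing_ge phi : strictly_increasing phi -> forall k, (k <= phi k)%nat.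
Proof. intros Hphi k. induction k; [lia|]. specialize (Hphi k). lia. Qed.

Lemma strictly_increasing_comp phi psi :
  strictly_increasing phi -> strictly_increasing psi -> strictly_increasing (fun k => phi (psi k)).
Proof.
  intros Hphi Hpsi k.
  assert (Hmono : forall a b, (a < b)%nat -> (phi a < phi b)%nat).
  { intros a b Hab. induction Hab; [apply Hphi|]. specialize (Hphi m). lia. }
  apply Hmono, Hpsi.
Qed.

Lemma Un_cv_subseq u l phi :
  strictly_increasing phi -> Un_cv u l -> Un_cv (fun k => u (phi k)) l.
Proof.
  intros Hphi Hu e He. destruct (Hu e He) as [N HN]. exists N. intros k Hk.
  apply HN. pose proof (strictly_increasing_ge phi Hphi k). lia.
Qed.

Lemma Un_cv_const c : Un_cv (fun _ => c) c.
Proof. intros e He. exists 0%nat. intros. unfold Rdist. rewrite Rminus_diag, Rabs_R0. exact He. Qed.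

Lemma Un_cv_of_dist_le u l d : (forall k, Rabs (u k - l) <= d k) -> Un_cv d 0 -> Un_cv u l.
Proof.
  intros H Hd e He. destruct (Hd e He) as [N HN]. exists N. intros k Hk.
  specialize (HN k Hk). unfold Rdist in *. rewrite Rminus_0_r in HN.
  pose proof (H k). pose proof (Rle_abs (d k)). lra.
Qed.

Lemma RinvN_le k m : (k <= m)%nat -> RinvN m <= RinvN k.
Proof. intros H. simpl. apply Rinv_le_contravar; [pose proof (pos_INR k); lra | apply Rplus_le_compat_r, le_INR, H]. Qed.

Lemma ValAdh_subseq u l : ValAdh u l ->
  exists phi, strictly_increasing phi /\ Un_cv (fun k => u (phi k)) l.
Proof.
  intros Hl.
  assert (Hnear : forall N, exists p, (N <= p)%nat /\ Rabs (u p - l) < RinvN N).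
  { intros N. apply (Hl (disc l (RinvN N)) N). exists (RinvN N). intros x Hx. exact Hx. }
  destruct (choice _ Hnear) as [g Hg].
  set (phi := fix phi k := match k with O => g O | S k' => g (S (phi k')) end).
  assert (Hphi : strictly_increasing phi) by (intros k; simpl; destruct (Hg (S (phi k))); lia).
  exists phi. split; [exact Hphi|].
  apply Un_cv_of_dist_le with (d := fun k => pos (RinvN k)); [|exact RinvN_cv].
  intros [|k]; simpl phi.
  - destruct (Hg O); lra.
  - destruct (Hg (S (phi k))) as [_ Hlt]. left. eapply Rlt_le_trans; [exact Hlt|].
    apply RinvN_le. pose proof (strictly_increasing_ge phi Hphi k). lia.
Qed.

Lemma bounded_cv_subseq (u : nat -> R) M : (forall k, Rabs (u k) <= M) ->
  exists phi, strictly_increasing phi /\ exists l, Un_cv (fun k => u (phi k)) l.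
Proof.
  intros HM.
  destruct (Bolzano_Weierstrass u (fun c => -M <= c <= M)) as [l Hl].
  - apply compact_P3.
  - intros k. specialize (HM k). unfold Rabs in HM. destruct (Rcase_abs (u k)); lra.
  - destruct (ValAdh_subseq u l Hl) as [phi [Hphi Hcv]]. eauto.
Qed.

Lemma bounded_list_cv_subseq (X : Type) (L : list (X -> R)) (x : nat -> X) M :
  (forall f k, In f L -> Rabs (f (x k)) <= M) ->
  exists phi, strictly_increasing phi /\
    forall f, In f L -> exists l, Un_cv (fun k => f (x (phi k))) l.
Proof.
  induction L as [|f L IH]; intros HB.
  - exists (fun k => k). split; [intros k; lia | intros f []].
  - destruct IH as [phi [Hphi Hcv]]; [intros; apply HB; simpl; auto|].
    destruct (bounded_cv_subseq (fun k => f (x (phi k))) M) as [psi [Hpsi [l Hl]]].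
    { intros; apply HB; simpl; auto. }
    exists (fun k => phi (psi k)). split; [apply strictly_increasing_comp; auto|].
    intros g [<-|Hg]; [eauto|].
    destruct (Hcv g Hg) as [l' Hl']. exists l'. apply (Un_cv_subseq (fun k => g (x (phi k)))); auto.
Qed.

Section RealSubspace.

Variables (X : Type) (add : X -> X -> X) (scal : R -> X -> X).

Definition real_linear (f : X -> R) : Prop :=
  (forall a b, f (add a b) = f a + f b) /\ (forall r a, f (scal r a) = r * f a).

Definition real_subspace (V : X -> Prop) : Prop :=
  (forall a b, V a -> V b -> V (add a b)) /\ (forall r a, V a -> V (scal r a)).

(* Induction on [L]: if [f] does not vanish on [V], pick [u] in [V] with [f u = 1]; then
   [x_k - f (x_k) u] lies in [V] and in the kernel of [f], and its limit there plus [(lim f (x_k)) u]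
   is a limit of [x_k].  If [f] vanishes on [V], any limit found for the rest of [L] will do. *)
Lemma subspace_limit (L : list (X -> R)) : (forall f, In f L -> real_linear f) ->
  forall (V : X -> Prop) (x : nat -> X), real_subspace V -> (forall k, V (x k)) ->
  (forall f, In f L -> exists l, Un_cv (fun k => f (x k)) l) ->
  exists y, V y /\ forall f, In f L -> Un_cv (fun k => f (x k)) (f y).
Proof.
  induction L as [|f L IH]; intros Hlin V x [Vadd Vscal] Vx Hcv.
  - exists (x O). split; [auto | intros f []].
  - assert (HlinL : forall g, In g L -> real_linear g) by (intros; apply Hlin; simpl; auto).
    destruct (Hlin f (or_introl eq_refl)) as [f_add f_scal].
    destruct (classic (exists u, V u /\ f u <> 0)) as [[u0 [Vu0 fu0]]|Hvanish].
    + set (u := scal (/ f u0) u0).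
      assert (Vu : V u) by (apply Vscal; auto).
      assert (fu : f u = 1) by (unfold u; rewrite f_scal; field; auto).
      destruct (Hcv f (or_introl eq_refl)) as [lf Hlf].
      set (w := fun k => add (x k) (scal (- f (x k)) u)).
      destruct (IH HlinL (fun z => V z /\ f z = 0) w) as [yw [[Vyw fyw] Hyw]].
      * split; [intros a b [Va fa] [Vb fb] | intros r a [Va fa]]; split; auto.
        -- rewrite f_add; lra.
        -- rewrite f_scal, fa; ring.
      * intros k. unfold w. split; [apply Vadd; auto|]. rewrite f_add, f_scal, fu. ring.
      * intros g Hg. destruct (Hcv g (or_intror Hg)) as [lg Hlg]. destruct (HlinL g Hg) as [g_add g_scal].
        exists (lg + - lf * g u).
        apply Un_cv_ext with (fun k => g (x k) + - f (x k) * g u).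
        { intros k. unfold w. rewrite g_add, g_scal. ring. }
        apply CV_plus, CV_mult, Un_cv_const; auto. apply CV_opp; auto.
      * exists (add yw (scal lf u)). split; [apply Vadd; auto|].
        intros g [<-|Hg].
        { rewrite f_add, f_scal, fyw, fu. replace (0 + lf * 1) with lf by ring. exact Hlf. }
        destruct (HlinL g Hg) as [g_add g_scal]. rewrite g_add, g_scal.
        apply Un_cv_ext with (fun k => g (w k) + f (x k) * g u).
        { intros k. unfold w. rewrite g_add, g_scal. ring. }
        apply CV_plus, CV_mult, Un_cv_const; auto.
    + assert (f0 : forall z, V z -> f z = 0).
      { intros z Vz. apply NNPP. intros fz. apply Hvanish. eauto. }
      destruct (IH HlinL V x (conj Vadd Vscal) Vx) as [y [Vy Hy]]; [intros; apply Hcv; simpl; auto|].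
      exists y. split; [exact Vy|]. intros g [<-|Hg]; auto.
      rewrite (f0 y Vy). apply Un_cv_ext with (fun _ => 0); [intros; rewrite f0; auto | apply Un_cv_const].
Qed.

End RealSubspace.

Definition Ccv (u : nat -> C) (z : C) : Prop :=
  Un_cv (fun k => re (u k)) (re z) /\ Un_cv (fun k => im (u k)) (im z).

Lemma Ccv_add u v z w : Ccv u z -> Ccv v w -> Ccv (fun k => Cadd (u k) (v k)) (Cadd z w).
Proof. intros [] []; split; simpl; apply CV_plus; auto. Qed.

Lemma Ccv_mul u v z w : Ccv u z -> Ccv v w -> Ccv (fun k => Cmul (u k) (v k)) (Cmul z w).
Proof.
  intros [] []; split; simpl; [apply CV_minus | apply CV_plus]; apply CV_mult; auto.
Qed.

Lemma Ccv_conj u z : Ccv u z -> Ccv (fun k => Cconj (u k)) (Cconj z).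
Proof. intros []; split; simpl; [|apply CV_opp]; auto. Qed.

Lemma Ccv_Csum n (f : nat -> nat -> C) (z : nat -> C) :
  (forall i, (i < n)%nat -> Ccv (fun k => f k i) (z i)) -> Ccv (fun k => Csum n (f k)) (Csum n z).
Proof.
  induction n; intros H; simpl.
  - split; apply Un_cv_const.
  - apply Ccv_add; [apply IHn; intros|]; apply H; lia.
Qed.

Lemma Ccv_unique u z w : Ccv u z -> Ccv u w -> z = w.
Proof. intros [] []. apply Ceq; eapply UL_sequence; eauto. Qed.

Definition Cnorm1 (z : C) : R := Rabs (re z) + Rabs (im z).

Lemma Cnorm1_ge0 z : 0 <= Cnorm1 z.
Proof. unfold Cnorm1. pose proof (Rabs_pos (re z)). pose proof (Rabs_pos (im z)). lra. Qed.

Lemma Cnorm1_add z w : Cnorm1 (Cadd z w) <= Cnorm1 z + Cnorm1 w.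
Proof.
  unfold Cnorm1; simpl.
  pose proof (Rabs_triang (re z) (re w)). pose proof (Rabs_triang (im z) (im w)). lra.
Qed.

Lemma Cnorm1_opp z : Cnorm1 (Copp z) = Cnorm1 z.
Proof. unfold Cnorm1; simpl. rewrite !Rabs_Ropp. reflexivity. Qed.

Lemma Cnorm1_mul z w : Cnorm1 (Cmul z w) <= Cnorm1 z * Cnorm1 w.
Proof.
  unfold Cnorm1; simpl.
  pose proof (Rabs_triang (re z * re w) (- (im z * im w))).
  pose proof (Rabs_triang (re z * im w) (im z * re w)).
  rewrite Rabs_Ropp, !Rabs_mult in *.
  pose proof (Rabs_pos (re z)); pose proof (Rabs_pos (im z)).
  pose proof (Rabs_pos (re w)); pose proof (Rabs_pos (im w)).
  unfold Rminus. nra.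
Qed.

Lemma Cnorm1_Csum n f : Cnorm1 (Csum n f) <= Rsum n (fun k => Cnorm1 (f k)).
Proof.
  induction n; simpl.
  - unfold Cnorm1; simpl. rewrite Rabs_R0. lra.
  - pose proof (Cnorm1_add (Csum n f) (f n)). lra.
Qed.

Lemma Ccv_of_Cnorm1_le u z d :
  (forall k, Cnorm1 (Cadd (u k) (Copp z)) <= d k) -> Un_cv d 0 -> Ccv u z.
Proof.
  intros H Hd. split; apply Un_cv_of_dist_le with d; auto; intros k; specialize (H k);
    unfold Cnorm1 in H; simpl in H; pose proof (Rabs_pos (re (u k) + - re z));
    pose proof (Rabs_pos (im (u k) + - im z)); unfold Rminus; lra.
Qed.

Lemma Cnorm1_le_of_Cnorm2 z d : 0 < d -> Cnorm2 z < d * d / 4 -> Cnorm1 z <= d.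
Proof.
  intros Hd H. unfold Cnorm1, Cnorm2 in *.
  assert (Rabs (re z) <= d / 2) by (unfold Rabs; destruct Rcase_abs; nra).
  assert (Rabs (im z) <= d / 2) by (unfold Rabs; destruct Rcase_abs; nra).
  lra.
Qed.

Lemma Cnorm2_le_frob2 n A i j : (i < n)%nat -> (j < n)%nat -> Cnorm2 (A i j) <= frob2 n A.
Proof.
  intros Hi Hj. unfold frob2. eapply Rle_trans.
  - apply (Rsum_ge_term n (fun j => Cnorm2 (A i j))); auto. intros; apply Cnorm2_ge0.
  - apply (Rsum_ge_term n (fun i => Rsum n (fun j => Cnorm2 (A i j)))); auto.
    intros; apply Rsum_nonneg; intros; apply Cnorm2_ge0.
Qed.

Definition mnorm1 n (A : Mat) : R := Rsum n (fun i => Rsum n (fun j => Cnorm1 (A i j))).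

Lemma mnorm1_ge0 n A : 0 <= mnorm1 n A.
Proof. apply Rsum_nonneg; intros; apply Rsum_nonneg; intros; apply Cnorm1_ge0. Qed.

Lemma Cnorm1_le_mnorm1 n A i j : (i < n)%nat -> (j < n)%nat -> Cnorm1 (A i j) <= mnorm1 n A.
Proof.
  intros Hi Hj. unfold mnorm1. eapply Rle_trans.
  - apply (Rsum_ge_term n (fun j => Cnorm1 (A i j))); auto. intros; apply Cnorm1_ge0.
  - apply (Rsum_ge_term n (fun i => Rsum n (fun j => Cnorm1 (A i j)))); auto.
    intros; apply Rsum_nonneg; intros; apply Cnorm1_ge0.
Qed.

Lemma mnorm1_le n A B : (forall i j, (i < n)%nat -> (j < n)%nat -> Cnorm1 (A i j) <= Cnorm1 (B i j)) ->
  mnorm1 n A <= mnorm1 n B.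
Proof. intros H. apply Rsum_le; intros i Hi; apply Rsum_le; intros j Hj; auto. Qed.

Lemma mnorm1_le_msub n A B : mnorm1 n A <= mnorm1 n B + mnorm1 n (msub A B).
Proof.
  unfold mnorm1. rewrite <- Rsum_add. apply Rsum_le; intros i Hi.
  rewrite <- Rsum_add. apply Rsum_le; intros j Hj.
  replace (A i j) with (Cadd (B i j) (msub A B i j)) at 1 by (unfold msub; Cring). apply Cnorm1_add.
Qed.

Lemma mnorm1_mmul n A B : mnorm1 n (mmul n A B) <= mnorm1 n A * mnorm1 n B.
Proof.
  unfold mnorm1 at 1. eapply Rle_trans with
    (Rsum n (fun i => Rsum n (fun j => Rsum n (fun k => Cnorm1 (A i k) * Cnorm1 (B k j))))).
  { apply Rsum_le; intros i Hi; apply Rsum_le; intros j Hj. rewrite mmul_in by auto.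
    eapply Rle_trans; [apply Cnorm1_Csum|]. apply Rsum_le; intros; apply Cnorm1_mul. }
  unfold mnorm1. rewrite Rmult_comm, Rsum_mul_l. apply Rsum_le; intros i Hi.
  rewrite Rsum_swap, Rsum_mul_l. apply Rsum_le; intros k Hk.
  rewrite <- Rsum_mul_l, (Rmult_comm _ (Cnorm1 (A i k))). apply Rmult_le_compat_l; [apply Cnorm1_ge0|].
  apply (Rsum_ge_term n (fun k => Rsum n (fun j => Cnorm1 (B k j)))); auto.
  intros; apply Rsum_nonneg; intros; apply Cnorm1_ge0.
Qed.

Lemma mnorm1_le_of_frob2 n (eta : R) : 0 < eta ->
  exists delta, 0 < delta /\ forall A, frob2 n A < delta -> mnorm1 n A <= eta.
Proof.
  intros Heta. pose proof (pos_INR n) as Hn.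
  set (d := eta / (INR n * INR n + 1)).
  assert (Hd : 0 < d) by (apply Rdiv_lt_0_compat; nra).
  exists (d * d / 4). split; [nra|]. intros A HA.
  apply Rle_trans with (Rsum n (fun _ => Rsum n (fun _ => d))).
  - apply Rsum_le; intros i Hi; apply Rsum_le; intros j Hj.
    apply Cnorm1_le_of_Cnorm2; auto. eapply Rle_lt_trans; [apply Cnorm2_le_frob2 | exact HA]; auto.
  - rewrite !Rsum_const. unfold d.
    replace (INR n * (INR n * (eta / (INR n * INR n + 1))))
      with (eta * (INR n * INR n / (INR n * INR n + 1))) by (field; nra).
    assert (INR n * INR n / (INR n * INR n + 1) <= 1).
    { apply Rmult_le_reg_r with (INR n * INR n + 1); [nra|].
      unfold Rdiv. rewrite Rmult_assoc, Rinv_l by nra. nra. }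
    nra.
Qed.

Definition coords n : list (Mat -> R) :=
  flat_map (fun i => flat_map (fun j =>
    (fun x : Mat => re (x i j)) :: (fun x : Mat => im (x i j)) :: nil) (seq 0 n)) (seq 0 n).

Lemma In_coords n f : In f (coords n) -> exists i j, (i < n)%nat /\ (j < n)%nat /\
  (f = (fun x : Mat => re (x i j)) \/ f = (fun x : Mat => im (x i j))).
Proof.
  unfold coords. rewrite in_flat_map. intros [i [Hi Hf]]. rewrite in_flat_map in Hf.
  destruct Hf as [j [Hj Hf]]. apply in_seq in Hi. apply in_seq in Hj.
  exists i, j. split; [lia | split; [lia|]]. destruct Hf as [<-|[<-|[]]]; auto.
Qed.

Lemma coords_entry n i j : (i < n)%nat -> (j < n)%nat ->
  In (fun x : Mat => re (x i j)) (coords n) /\ In (fun x : Mat => im (x i j)) (coords n).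
Proof.
  intros Hi Hj. unfold coords. rewrite !in_flat_map.
  split; exists i; (split; [apply in_seq; lia|]); rewrite in_flat_map; exists j;
    (split; [apply in_seq; lia | simpl; auto]).
Qed.

Lemma real_linear_coords n f : In f (coords n) -> real_linear Mat madd rscal f.
Proof. intros Hf. destruct (In_coords n f Hf) as [i [j [_ [_ [-> | ->]]]]]; split; intros; simpl; ring. Qed.

Lemma Cnorm2_le_gram_diag n g i j : (i < n)%nat -> (j < n)%nat ->
  Cnorm2 (g i j) <= re (mmul n (adj g) g j j).
Proof.
  intros Hi Hj. rewrite mmul_in, re_Csum by auto.
  rewrite (Rsum_ext n _ (fun l => Cnorm2 (g l j))) by (intros; unfold adj, Cnorm2; simpl; ring).
  apply (Rsum_ge_term n (fun l => Cnorm2 (g l j))); auto. intros; apply Cnorm2_ge0.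
Qed.

Lemma gram_cv n (x : nat -> Mat) y i j : (i < n)%nat -> (j < n)%nat ->
  (forall f, In f (coords n) -> Un_cv (fun k => f (x k)) (f y)) ->
  Ccv (fun k => mmul n (adj (x k)) (x k) i j) (mmul n (adj y) y i j).
Proof.
  intros Hi Hj Hcv.
  assert (Hentry : forall l m, (l < n)%nat -> (m < n)%nat -> Ccv (fun k => x k l m) (y l m)).
  { intros l m Hl Hm. destruct (coords_entry n l m Hl Hm) as [Hre Him].
    split; [exact (Hcv _ Hre) | exact (Hcv _ Him)]. }
  replace (fun k => mmul n (adj (x k)) (x k) i j)
    with (fun k => Csum n (fun l => Cmul (adj (x k) i l) (x k l j)))
    by (apply functional_extensionality; intros; rewrite mmul_in; auto).
  rewrite mmul_in by auto. apply Ccv_Csum; intros l Hl. apply Ccv_mul; [apply Ccv_conj|]; auto.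
Qed.

Lemma Cnorm2_le_of_gram_near n g b i j : (i < n)%nat -> (j < n)%nat ->
  Cnorm1 (msub (mmul n (adj g) g) b j j) <= 1 -> Cnorm2 (g i j) <= Cnorm1 (b j j) + 1.
Proof.
  intros Hi Hj Hnear. eapply Rle_trans; [apply (Cnorm2_le_gram_diag n); auto|].
  unfold msub, Cnorm1 in *; simpl in Hnear.
  pose proof (Rle_abs (re (mmul n (adj g) g j j) + - re (b j j))).
  pose proof (Rle_abs (re (b j j))). pose proof (Rabs_pos (im (b j j))).
  pose proof (Rabs_pos (im (mmul n (adj g) g j j) + - im (b j j))). lra.
Qed.

Lemma Rabs_le_of_sqr_le x T : 0 <= T -> x * x <= T -> Rabs x <= T + 1.
Proof. intros HT H. unfold Rabs. destruct Rcase_abs; nra. Qed.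

Lemma gram_limit n (V : Mat -> Prop) b :
  (forall x, V x -> wf n x) -> real_subspace Mat madd rscal V -> wf n b ->
  (forall e, 0 < e -> exists g, V g /\ forall i j, (i < n)%nat -> (j < n)%nat ->
     Cnorm1 (msub (mmul n (adj g) g) b i j) <= e) ->
  exists y, V y /\ b = mmul n (adj y) y.
Proof.
  intros Vwf HV Hb Happrox.
  destruct (choice (fun k g => V g /\ forall i j, (i < n)%nat -> (j < n)%nat ->
     Cnorm1 (msub (mmul n (adj g) g) b i j) <= RinvN k)) as [G HG].
  { intros k. apply Happrox, cond_pos. }
  set (T := Rsum n (fun l => Cnorm1 (b l l) + 1)).
  assert (HT : 0 <= T) by (apply Rsum_nonneg; intros; pose proof (Cnorm1_ge0 (b k k)); lra).
  assert (HGT : forall k i j, (i < n)%nat -> (j < n)%nat -> Cnorm2 (G k i j) <= T).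
  { intros k i j Hi Hj. eapply Rle_trans.
    - apply (Cnorm2_le_of_gram_near n); auto. eapply Rle_trans; [apply HG; auto|].
      eapply Rle_trans; [apply (RinvN_le 0 k); lia | right; simpl; rewrite Rplus_0_l; apply Rinv_1].
    - apply (Rsum_ge_term n (fun l => Cnorm1 (b l l) + 1)); auto.
      intros l _. pose proof (Cnorm1_ge0 (b l l)). lra. }
  destruct (bounded_list_cv_subseq Mat (coords n) G (T + 1)) as [phi [Hphi Hcv]].
  { intros f k Hf. destruct (In_coords n f Hf) as [i [j [Hi [Hj [-> | ->]]]]];
      apply Rabs_le_of_sqr_le; auto; pose proof (HGT k i j Hi Hj); unfold Cnorm2 in *; nra. }
  destruct (subspace_limit Mat madd rscal (coords n) (real_linear_coords n) V (fun k => G (phi k)))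
    as [y [Vy Hy]]; auto.
  { intros; apply HG. }
  exists y. split; [exact Vy|]. apply (wf_ext n); auto using wf_mmul. intros i j Hi Hj.
  apply (Ccv_unique (fun k => mmul n (adj (G (phi k))) (G (phi k)) i j)); [|apply gram_cv; auto].
  apply Ccv_of_Cnorm1_le with (d := fun k => pos (RinvN k)); [|exact RinvN_cv].
  intros k. eapply Rle_trans; [apply (HG (phi k)); auto|].
  apply RinvN_le, strictly_increasing_ge, Hphi.
Qed.

Lemma Cnorm1_msub_shift n X b e i j : 0 <= e -> (i < n)%nat -> (j < n)%nat ->
  Cnorm1 (msub X b i j) <= Cnorm1 (msub X (shift n b e) i j) + e.
Proof.
  intros He Hi Hj.
  replace (msub X b i j) with (Cadd (msub X (shift n b e) i j) (Cmul (mkC e 0) (mid n i j)))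
    by (unfold msub, shift, madd, rscal, mscal; Cring).
  eapply Rle_trans; [apply Cnorm1_add|]. apply Rplus_le_compat_l.
  unfold Cnorm1. rewrite mid_in by auto.
  destruct (Nat.eqb i j); simpl; rewrite ?Rmult_0_r, ?Rmult_1_r, ?Rmult_0_l, ?Rminus_0_r, ?Rplus_0_r,
    ?Rabs_R0, ?Rabs_right by lra; lra.
Qed.

Lemma logmodular_gram_near n S b e : logmodular n S -> psd n b -> 0 < e ->
  exists g, S g /\ forall i j, (i < n)%nat -> (j < n)%nat ->
    Cnorm1 (msub (mmul n (adj g) g) b i j) <= e.
Proof.
  intros Hlog Hb He.
  assert (Hp : positive_invertible n (shift n b (e / 2))) by (apply positive_invertible_shift; auto; lra).
  destruct (Hlog _ Hp (e / 2 * (e / 2) / 4)) as [g [[Sg _] Hg]]; [nra|].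
  exists g. split; [exact Sg|]. intros i j Hi Hj.
  eapply Rle_trans; [apply (Cnorm1_msub_shift n _ b (e / 2)); auto; lra|].
  assert (Cnorm1 (msub (mmul n (adj g) g) (shift n b (e / 2)) i j) <= e / 2).
  { apply Cnorm1_le_of_Cnorm2; [lra|]. eapply Rle_lt_trans; [apply Cnorm2_le_frob2 | exact Hg]; auto. }
  lra.
Qed.

Lemma gram_mul_cogram n a d : wf n d -> mmul n a d = mid n -> mmul n d a = mid n ->
  mmul n (mmul n (adj a) a) (mmul n d (adj d)) = mid n.
Proof.
  intros Hd Had Hda.
  rewrite mmul_assoc, <- (mmul_assoc n a d), Had, mmul_mid_l by (apply wf_adj; auto).
  rewrite <- adj_mmul, Hda. apply adj_mid.
Qed.

(* [p - X = p (G - q) X], so [X] is close to [p] once [G] is close to [p^-1 = q]. *)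
Lemma inverse_perturbation n p q G X eta : wf n p -> wf n X ->
  mmul n p q = mid n -> mmul n G X = mid n ->
  mnorm1 n (msub G q) <= eta -> mnorm1 n p * eta <= 1 / 2 ->
  mnorm1 n (msub X p) <= 2 * mnorm1 n p * mnorm1 n p * eta.
Proof.
  intros Hp HX Hpq HGX HE Hsmall.
  pose proof (mnorm1_le_msub n X p) as HXle. pose proof (mnorm1_ge0 n p). pose proof (mnorm1_ge0 n X).
  set (E := msub G q) in *. set (P := mnorm1 n p) in *. pose proof (mnorm1_ge0 n E).
  assert (HGq : G = madd q E) by (mat_ext; unfold E, madd, msub; Cring).
  assert (Hdiff : forall i j, msub X p i j = Copp (mmul n (mmul n p E) X i j)).
  { intros i j.
    rewrite <- (mmul_mid_r n p Hp) at 1. rewrite <- HGX, <- mmul_assoc, HGq, mmul_madd_r, Hpq,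
      mmul_madd_l, mmul_mid_l by auto.
    unfold msub, madd. Cring. }
  assert (HXp : mnorm1 n (msub X p) <= P * mnorm1 n E * mnorm1 n X).
  { eapply Rle_trans.
    - apply mnorm1_le with (B := mmul n (mmul n p E) X). intros i j _ _. rewrite Hdiff, Cnorm1_opp. lra.
    - eapply Rle_trans; [apply mnorm1_mmul|].
      apply Rmult_le_compat_r; [apply mnorm1_ge0 | apply mnorm1_mmul]. }
  assert (HPE : P * mnorm1 n E <= P * eta) by (apply Rmult_le_compat_l; auto).
  assert (P * mnorm1 n E * mnorm1 n X <= 1 / 2 * mnorm1 n X) by (apply Rmult_le_compat_r; lra).
  assert (HX2 : mnorm1 n X <= 2 * P) by lra.
  eapply Rle_trans; [exact HXp|].
  replace (2 * P * P * eta) with (P * eta * (2 * P)) by ring.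
  apply Rmult_le_compat; auto. apply Rmult_le_pos; auto.
Qed.

Lemma perturbation_tolerance P e : 0 <= P -> 0 < e ->
  exists eta, 0 < eta /\ P * eta <= 1 / 2 /\ 2 * P * P * eta <= e.
Proof.
  intros HP He. exists (e / (2 * (P + 1) * (P + 1) * (e + 1))).
  assert (Hden : 0 < 2 * (P + 1) * (P + 1) * (e + 1)) by nra.
  repeat split.
  - apply Rdiv_lt_0_compat; auto.
  - apply Rmult_le_reg_r with (2 * (P + 1) * (P + 1) * (e + 1)); auto.
    unfold Rdiv. rewrite Rmult_assoc, (Rmult_assoc e), Rinv_l by lra. nra.
  - apply Rmult_le_reg_r with (2 * (P + 1) * (P + 1) * (e + 1)); auto.
    unfold Rdiv. rewrite Rmult_assoc, (Rmult_assoc e), Rinv_l by lra. nra.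
Qed.

Lemma logmodular_cogram_near n S b e : (forall x, S x -> wf n x) -> logmodular n S -> psd n b -> 0 < e ->
  exists d, S d /\ forall i j, (i < n)%nat -> (j < n)%nat ->
    Cnorm1 (msub (mmul n d (adj d)) b i j) <= e.
Proof.
  intros Swf Hlog Hb He.
  set (p := shift n b (e / 2)).
  assert (Hp : positive_invertible n p) by (apply positive_invertible_shift; auto; lra).
  destruct Hp as [Hp_psd [Hp_wf [q [Hq_wf [Hpq Hqp]]]]].
  assert (Hq : positive_invertible n q).
  { split; [apply (psd_inverse n p q); auto | split; auto; exists p; auto]. }
  destruct (perturbation_tolerance (mnorm1 n p) (e / 2)) as [eta [Heta [Hsmall Hbound]]];
    [apply mnorm1_ge0 | lra |].
  destruct (mnorm1_le_of_frob2 n eta Heta) as [delta [Hdelta Hfrob]].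
  destruct (Hlog q Hq delta Hdelta) as [a [[Sa [d [Sd [Had Hda]]]] Ha]].
  exists d. split; [exact Sd|]. intros i j Hi Hj.
  eapply Rle_trans; [apply (Cnorm1_msub_shift n _ b (e / 2)); auto; lra|]. fold p.
  assert (mnorm1 n (msub (mmul n d (adj d)) p) <= e / 2).
  { eapply Rle_trans; [|exact Hbound].
    apply (inverse_perturbation n p q (mmul n (adj a) a)); auto using wf_mmul.
    apply gram_mul_cogram; auto. }
  pose proof (Cnorm1_le_mnorm1 n (msub (mmul n d (adj d)) p) i j Hi Hj). lra.
Qed.

Lemma real_subspace_subalgebra n S : unital_subalgebra n S -> real_subspace Mat madd rscal S.
Proof. intros (_ & _ & Sadd & Sscal & _). split; [exact Sadd | intros r a; apply Sscal]. Qed.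

Lemma real_subspace_adj V : real_subspace Mat madd rscal V ->
  real_subspace Mat madd rscal (fun z => V (adj z)).
Proof.
  intros [Vadd Vscal]. split; intros; [rewrite adj_madd | rewrite adj_rscal]; auto.
Qed.

Theorem mainTheorem1 (n : nat) (S : Mat -> Prop) :
  unital_subalgebra n S -> logmodular n S ->
  forall b : Mat, psd n b ->
  exists a c : Mat, S a /\ S c /\ b = mmul n (adj a) a /\ b = mmul n c (adj c).
Proof.
  intros HS Hlog b Hb.
  assert (Swf : forall x, S x -> wf n x) by apply HS.
  assert (Hbwf : wf n b) by apply Hb.
  destruct (gram_limit n S b Swf (real_subspace_subalgebra n S HS) Hbwf) as [a [Sa Ha]].
  { intros e He. apply logmodular_gram_near; auto. }
  destruct (gram_limit n (fun z => S (adj z)) b) as [y [Sy Hy]]; auto.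
  - intros x Sx. rewrite <- (adj_adj x). apply wf_adj, Swf, Sx.
  - apply real_subspace_adj, (real_subspace_subalgebra n), HS.
  - intros e He. destruct (logmodular_cogram_near n S b e Swf Hlog Hb He) as [d [Sd Hd]].
    exists (adj d). rewrite adj_adj. auto.
  - exists a, (adj y). rewrite adj_adj. auto.
Qed.
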